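(* Let $K$ be a field and $(Q,f,g,c,W)$ as in the setting below, and assume that either $Q$ satisfies $(\star)$, or $Q$ satisfies $(\diamond)$ and $\prod_{\alpha\in\Omega}c_\alpha\neq1$ for $\Omega$ a set of representatives of the $g$-orbits. Then the potential $W$ is not rigid.
   Context: Setting: $Q$ is a finite quiver with arrow set $Q_1$, connected, without loops or $2$-cycles, every vertex being the source of exactly two arrows and the target of exactly two arrows, equipped with bijections $f,g:Q_1\to Q_1$ such that for each $\alpha$, $\{f(\alpha),g(\alpha)\}$ is the set of the two arrows starting at the target of $\alpha$, and $f^3=\mathrm{id}$. $n_\alpha$ is the size of the $g$-orbit of $\alpha$. $c:Q_1\to K^\times$ is constant on $g$-orbits. Paths compose left to right. $W=\sum_\alpha \alpha\cdot f(\alpha)\cdot f^2(\alpha)-\sum_\beta c_\beta\,\beta\cdot g(\beta)\cdots g^{n_\beta-1}(\beta)$ (sums over representatives of $f$-orbits, resp. $g$-orbits) in the completed path algebra $\widehat{KQ}$. The Jacobian ideal $J(W)$ is the closure of the two-sided ideal generated by the cyclic derivatives of $W$. $W$ is rigid if every potential on $Q$ is cyclically equivalent to an element of $J(W)$. $(\star)$: for every $\alpha$, $n_\alpha\ge4$ or $n_{f(\alpha)}\ge4$. $(\diamond)$: $n_\alpha=3$ for all $\alpha$. *)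

From mathcomp Require Import all_boot all_order all_algebra.
Set Implicit Arguments. Unset Strict Implicit. Unset Printing Implicit Defensive.
Import GRing.Theory.
Local Open Scope ring_scope.

(* Elements of the completed path algebra \hat{KQ} are arbitrary (possibly
   infinite) K-linear combinations of paths.  A path is encoded as a pair
   (v, p) : V * seq A  (start vertex v, arrows p composed LEFT TO RIGHT);
   (v, [::]) is the trivial path e_v.  A series is a function giving the
   coefficient of each path; only valid paths matter (all operations below
   produce series vanishing on invalid pairs). *)

Section PathAlgebra.
Variables (K : fieldType) (V A : finType) (s t : A -> V).

Definition series := V -> seq A -> K.

Fixpoint valid_from (v : V) (p : seq A) : bool :=
  match p with
  | [::] => true
  | a :: p' => (s a == v) && valid_from (t a) p'
  end.

Definition end_of (v : V) (p : seq A) : V := last v (map t p).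

Definition is_cycle (v : V) (p : seq A) : bool :=
  (p != [::]) && valid_from v p && (end_of v p == v).

Definition path_series (v : V) (p : seq A) : series :=
  fun w q => if (w == v) && (q == p) then 1 else 0.

Definition smul (x y : series) : series :=
  fun v p => if valid_from v p then
     \sum_(i < (size p).+1) x v (take i p) * y (end_of v (take i p)) (drop i p)
   else 0.

(* cyclic derivative  d_xi (a_1 ... a_d) = sum_{k : a_k = xi} a_{k+1}...a_d a_1...a_{k-1},
   extended (coefficientwise) to series *)
Definition dcyc (xi : A) (W : series) : series :=
  fun w r => if valid_from w (rcons r xi) && (end_of w (rcons r xi) == w) then
     \sum_(k < (size r).+1)
        W (s (head xi (rotr k.+1 (rcons r xi)))) (rotr k.+1 (rcons r xi))
   else 0.

(* closure in the (path-length) adic topology of a set S of series *)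
Definition in_closure (S : series -> Prop) (x : series) : Prop :=
  forall n : nat, exists y, S y /\ forall v p, (size p < n)%N -> x v p = y v p.

Definition in_jac_ideal (W : series) (x : series) : Prop :=
  exists l : seq (series * A * series),
    forall v p, x v p = \sum_(e <- l) smul (smul e.1.1 (dcyc e.1.2 W)) e.2 v p.

Definition jacobian_ideal (W : series) : series -> Prop :=
  in_closure (in_jac_ideal W).

Definition potential (P : series) : Prop :=
  forall v p, P v p != 0 -> is_cycle v p.

Definition rot1_start (v : V) (p : seq A) : V :=
  match p with a :: _ => t a | [::] => v end.

Definition in_cyc_comm_span (x : series) : Prop :=
  exists l : seq (K * (V * seq A)),
    (forall e, e \in l -> is_cycle e.2.1 e.2.2) /\
    forall v p, x v p = \sum_(e <- l)
       e.1 * (path_series e.2.1 e.2.2 v p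
              - path_series (rot1_start e.2.1 e.2.2) (rot 1 e.2.2) v p).

Definition cyc_equiv (P Q : series) : Prop :=
  in_closure in_cyc_comm_span (fun v p => P v p - Q v p).

Definition rigid (W : series) : Prop :=
  forall P, potential P -> exists y, jacobian_ideal W y /\ cyc_equiv P y.

End PathAlgebra.

Section Setting.
Variables (V A : finType) (s t : A -> V).

Definition underlying_adj : rel V :=
  fun x y => [exists a, ((s a == x) && (t a == y)) || ((s a == y) && (t a == x))].

Definition quiver_setting (f g : A -> A) : Prop :=
  ((0 < #|V|)%N /\ (forall u v, connect underlying_adj u v)) /\
  (forall a, s a != t a) /\
  (forall a b, s a = t b -> t a = s b -> False) /\
  (forall v, #|[set a | s a == v]| = 2%N /\ #|[set a | t a == v]| = 2%N) /\
  (bijective f /\ bijective g) /\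
  (forall a, [set f a; g a] = [set b | s b == t a]) /\
  (forall a, f (f (f a)) = a).

Definition orbit_reps (h : A -> A) (R : {set A}) : Prop :=
  forall a, #|[set r in R | fconnect h a r]| = 1%N.

(* the potential W, for chosen representatives Rf of f-orbits and Rg of g-orbits;
   n_b = order g b is the size of the g-orbit of b, and
   traject g b (order g b) = [:: b; g b; ...; g^(n_b - 1) b] *)
Definition W_pot (K : fieldType) (f g : A -> A) (c : A -> K) (Rf Rg : {set A})
  : series K V A :=
  fun v p => \sum_(a in Rf) @path_series K V A (s a) [:: a; f a; f (f a)] v p
           - \sum_(b in Rg) c b * @path_series K V A (s b) (traject g b (order g b)) v p.

End Setting.

From mathcomp Require Import all_boot all_order all_algebra zify ring.
Set Implicit Arguments. Unset Strict Implicit. Unset Printing Implicit Defensive.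
Import GRing.Theory.
Local Open Scope ring_scope.

(* Let T_a = a.f(a).f^2(a) and G_b = b.g(b)...g^(n_b - 1)(b), and consider the functional
     lambda(x) = sum_a x(T_a) + sum_b c_b^-1 x(G_b)
   over ALL arrows a, b, i.e. over every rotation of every f-triangle and g-cycle.
   It reads only paths of length at most |Q_1|, so it is continuous, and it is
   invariant under rotating cycles (c is constant on g-orbits), so it vanishes on
   the closure of the commutator span.  Since f(a) <> g(a) and n_b >= 3, the only
   terms of u.(d_xi W).v that it reads are the cycles e.(d_xi W).xi and xi.(d_xi W).e,
   which come once from the f-part of d_xi W with coefficient 1 and once from its
   g-part with coefficient -c_xi; weighted by 1 and c_xi^-1 they cancel, so lambda
   vanishes on J(W).  As lambda(T_a) = 1, the potential T_a is not cyclically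
   equivalent to an element of J(W). *)

Lemma sum_pick1 (R : nzRingType) (I : finType) (i0 : I) (G : I -> R) :
  \sum_i (i == i0)%:R * G i = G i0.
Proof.
under eq_bigr => i _ do rewrite mulr_natl mulrb.
by rewrite -big_mkcond big_pred1_eq.
Qed.

Lemma sum_ord_pick1 (R : nzRingType) m k (G : nat -> R) :
  \sum_(j < m) (j == k :> nat)%:R * G j = (k < m)%:R * G k.
Proof.
rewrite mulr_natl mulrb -(big_ord1_eq +%R G) [RHS]big_mkcond.
by apply: eq_bigr => j _; rewrite mulr_natl mulrb.
Qed.

Lemma sum_triangle_pick1 (R : nzRingType) n i0 j0 (G : nat -> nat -> R) :
  (j0 <= i0 <= n)%N ->
  \sum_(i < n.+1) \sum_(j < i.+1) ((i == i0 :> nat) && (j == j0 :> nat))%:R * G i j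
  = G i0 j0.
Proof.
case/andP=> le_ji le_in.
under eq_bigr => i _ do under eq_bigr => j _ do rewrite -mulnb natrM -mulrA.
under eq_bigr => i _ do rewrite -mulr_sumr sum_ord_pick1.
by rewrite (@sum_ord_pick1 _ _ _ (fun i => (j0 < i.+1)%:R * G i j0)) !ltnS le_ji le_in !mul1r.
Qed.

Lemma traject_eqF (A : finType) (h1 h2 : A -> A) x y m n :
  (forall a, h1 a != h2 a) -> (1 < m)%N -> (traject h1 x m == traject h2 y n) = false.
Proof.
move=> neq12 gt1; apply/eqP => e; have /= mn := congr1 size e.
rewrite !size_traject in mn; move: e; rewrite -mn.
by case: m gt1 {mn} => [|[|m]] //= _ [xy e]; move: (neq12 x); rewrite e xy eqxx.
Qed.

Section OrbitPaths.
Variables (V A : finType) (s t : A -> V) (h : A -> A).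
Hypothesis h_inj : injective h.
Hypothesis s_h : forall a, s (h a) = t a.

Lemma order_step x : order h (h x) = order h x.
Proof. exact: order_id_cycle (cycle_orbit h_inj x). Qed.

Lemma order_iter k x : order h (iter k h x) = order h x.
Proof. by elim: k => //= k IH; rewrite order_step. Qed.

Lemma orbit_cons x : orbit h x = x :: traject h (h x) (order h x).-1.
Proof. by rewrite /orbit -{1}(orderSpred h x). Qed.

Lemma valid_traject x m : valid_from s t (s x) (traject h x m).
Proof. by elim: m x => //= m IH x; rewrite eqxx -s_h IH. Qed.

Lemma end_traject x m : end_of t (s x) (traject h x m) = s (iter m h x).
Proof.
elim: m x => // m IH x; rewrite /end_of /= -s_h.
by have := IH (h x); rewrite /end_of -iterSr => ->.
Qed.

Lemma drop_traject i n x : (i <= n)%N ->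
  drop i (traject h x n) = traject h (iter i h x) (n - i).
Proof.
by move=> le_in; rewrite -{1}(subnKC le_in) trajectD drop_size_cat ?size_traject.
Qed.

Lemma rot_orbit k x : (k <= order h x)%N -> rot k (orbit h x) = orbit h (iter k h x).
Proof.
move=> le_k; rewrite /orbit order_iter /rot drop_traject // take_traject //.
rewrite -[in RHS](subnK le_k) trajectD; congr (_ ++ _).
by rewrite -iterD subnK // iter_order.
Qed.

Lemma rot1_orbit x : rot 1 (orbit h x) = orbit h (h x).
Proof. by rewrite rot_orbit ?order_gt0. Qed.

Lemma cycle_from_orbit v x :
  valid_from s t v (orbit h x) && (end_of t v (orbit h x) == v) = (v == s x).
Proof.
case: (eqVneq v (s x)) => [->|ne]; last by rewrite orbit_cons /= eq_sym (negbTE ne).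
by rewrite valid_traject end_traject iter_order // eqxx.
Qed.

Lemma cycle_from_rcons_orbit v xi r : xi :: r == orbit h xi ->
  valid_from s t v (rcons r xi) && (end_of t v (rcons r xi) == v) = (v == t xi).
Proof. by move/eqP=> e; rewrite -rot1_cons e rot1_orbit cycle_from_orbit s_h. Qed.

Lemma cons_traject_eq_orbit x y m : (1 < order h x)%N ->
  (x :: traject h y m == orbit h x) = (m == (order h x).-1) && (y == h x).
Proof.
move=> gt1; rewrite orbit_cons eqseq_cons eqxx /=.
apply/eqP/andP => [e|[/eqP-> /eqP->]] //.
have em : m = (order h x).-1 by have := congr1 size e; rewrite !size_traject.
split; first by rewrite em.
by move: e; rewrite em; case: (order h x) gt1 => [|[|n]] //= _ [->].
Qed.

Lemma path_series_orbit (K : fieldType) x xi p :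
  path_series K (s x) (orbit h x) (s (head xi p)) p = (p == orbit h x)%:R.
Proof.
rewrite /path_series; have [->|] := eqVneq p (orbit h x); last by rewrite andbF.
by rewrite [in head _ _]orbit_cons /= eqxx.
Qed.

Lemma rotr_rcons_eq_orbit r xi a k : (k < (size r).+1)%N ->
  (rotr k.+1 (rcons r xi) == orbit h a) = (xi :: r == orbit h xi) && (iter k h a == xi).
Proof.
move=> lt_k.
have -> : (rotr k.+1 (rcons r xi) == orbit h a) = (rcons r xi == rot k.+1 (orbit h a)).
  by apply/eqP/eqP => [<-|->]; [rewrite rotrK | rewrite rotK].
have [sz|sz] := eqVneq (size r).+1 (order h a); last first.
  have -> : (rcons r xi == rot k.+1 (orbit h a)) = false.
    apply/eqP => /(congr1 size).
    by rewrite size_rcons size_rot size_orbit => /eqP; rewrite (negbTE sz).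
  case: eqP => //= /(congr1 size) /= sz'; case: eqP => // ka.
  by move: sz; rewrite sz' size_orbit -ka order_iter eqxx.
rewrite (@rotS _ k (orbit h a)) ?size_orbit -?sz // -rot1_cons.
have -> : (rot 1 (xi :: r) == rot 1 (rot k (orbit h a))) = (xi :: r == rot k (orbit h a)).
  by apply/eqP/eqP => [/rot_inj|->].
rewrite rot_orbit -?sz 1?ltnW //.
have [->|ne] := eqVneq (iter k h a) xi; first by rewrite andbT.
by rewrite andbF; apply/eqP; rewrite orbit_cons => -[ka _]; rewrite ka eqxx in ne.
Qed.

Lemma sum_iter_eq x y : (\sum_(k < order h y) (iter k h x == y))%N = fconnect h y x.
Proof.
have [con|ncon] := boolP (fconnect h y x); last first.
  rewrite big1 // => k _; case: eqP => // xy.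
  by move: ncon; rewrite fconnect_sym // -xy fconnect_iter.
have con' : fconnect h x y by rewrite fconnect_sym.
have oxy : order h y = order h x by rewrite -{1}(iter_findex con') order_iter.
rewrite oxy (bigD1 (Ordinal (findex_max con'))) //= iter_findex // eqxx.
rewrite big1 // => k /eqP nk; case: eqP => // xy; case: nk; apply: val_inj => /=.
by rewrite -xy findex_iter.
Qed.

Lemma smul3_traject (K : fieldType) (u d v : series K V A) x n :
  smul s t (smul s t u d) v (s x) (traject h x n) =
  \sum_(i < n.+1) (\sum_(j < i.+1) u (s x) (traject h x j) *
      d (s (iter j h x)) (traject h (iter j h x) (i - j))) *
    v (s (iter i h x)) (traject h (iter i h x) (n - i)).
Proof.
rewrite /smul valid_traject size_traject; apply: eq_bigr => i _.
have le_in : (i <= n)%N by rewrite -ltnS.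
rewrite take_traject // valid_traject end_traject drop_traject // size_traject.
congr (_ * _); apply: eq_bigr => j _.
have le_ji : (j <= i)%N by rewrite -ltnS.
by rewrite take_traject // end_traject drop_traject.
Qed.

(* A window [j, i) of [orbit h x] that is the trajectory of [h xi] of length
   [order h xi - 1] misses exactly one arrow of the cycle [orbit h x]: the last one
   (then x = h xi) or the first one (then x = xi). *)
Lemma orbit_window_eq x xi i j : (1 < order h xi)%N ->
  (j <= i)%N -> (i <= order h x)%N ->
  (((i - j)%N == (order h xi).-1) && (iter j h x == h xi)) =
  ((i == (order h x).-1) && (j == 0%N) && (x == h xi)) ||
  ((i == order h x) && (j == 1%N) && (x == xi)).
Proof.
move=> gt1 le_ji le_i.
have [e|ne] := eqVneq (iter j h x) (h xi); last first.
  rewrite andbF; case: j le_ji ne => [|[|j]] _ /= ne; rewrite ?andbF ?orbF //=.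
  - by rewrite (negbTE ne) andbF.
  - have [exi|nx] := eqVneq x xi; first by rewrite exi eqxx in ne.
    by rewrite andbF.
have ox : order h x = order h xi by rewrite -(order_iter j) e order_step.
rewrite andbT ox; case: j le_ji e => [|[|j]] le_ji /= e.
- by rewrite subn0 e !eqxx /= !andbT !andbF orbF.
- move/h_inj: e => ->; rewrite !eqxx /= !andbT !andbF /=.
  move: le_i gt1; rewrite ox; case: (order h xi) => [|n] le_i gt1 /=; first by case: i le_ji le_i.
  by rewrite subn1 -eqSS prednK // (leq_trans _ le_ji).
- by rewrite !andbF; apply/negP => /eqP; move: le_i gt1; rewrite ox -subn1; lia.
Qed.

Lemma smul3_orbit (K : fieldType) (u d v : series K V A) (k : K) xi x :
  (1 < order h xi)%N ->
  (forall y m, d (s y) (traject h y m) = k * ((m == (order h xi).-1) && (y == h xi))%:R) ->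
  smul s t (smul s t u d) v (s x) (orbit h x) =
  k * ((x == h xi)%:R * (u (s x) [::] * v (s (finv h x)) [:: finv h x])
     + (x == xi)%:R * (u (s x) [:: x] * v (s x) [::])).
Proof.
move=> gt1 d_traject; rewrite /orbit smul3_traject.
set n := order h x.
have n_gt0 : (0 < n)%N by apply: order_gt0.
pose G1 i j := (x == h xi)%:R * (k * (u (s x) (traject h x j) *
      v (s (iter i h x)) (traject h (iter i h x) (n - i)))).
pose G2 i j := (x == xi)%:R * (k * (u (s x) (traject h x j) *
      v (s (iter i h x)) (traject h (iter i h x) (n - i)))).
transitivity (\sum_(i < n.+1) \sum_(j < i.+1)
   (((i == n.-1 :> nat) && (j == 0%N :> nat))%:R * G1 i j +
    ((i == n :> nat) && (j == 1%N :> nat))%:R * G2 i j)).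
  apply: eq_bigr => i _; rewrite mulr_suml; apply: eq_bigr => j _.
  have le_ji : (j <= i)%N by rewrite -ltnS.
  have le_in : (i <= n)%N by rewrite -ltnS.
  rewrite d_traject (orbit_window_eq gt1 le_ji le_in) /G1 /G2.
  case: (j : nat) le_ji => [|[|j']] _ /=; rewrite ?andbF ?andbT ?orbF /=;
    case: (i == _ :> nat); case: (x == _);
    rewrite /= ?mul0r ?mulr0 ?add0r ?addr0 ?mul1r ?mulr1 //; ring.
under eq_bigr => i _ do rewrite big_split /=.
rewrite big_split /= !sum_triangle_pick1 ?leq_pred ?leqnn ?n_gt0 // /G1 /G2 /= subnn.
have -> : (n - n.-1 = 1)%N by rewrite -subn1 subKn.
by rewrite iter_order // mulrDr !mulrA ![_ * k]mulrC.
Qed.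

End OrbitPaths.

Section OrbitRepresentatives.
Variables (K : fieldType) (A : finType) (h : A -> A) (R : {set A}) (w : A -> K).
Hypothesis h_inj : injective h.
Hypothesis w_h : forall a, w (h a) = w a.
Hypothesis R_reps : orbit_reps h R.

Lemma w_iter k x : w (iter k h x) = w x.
Proof. by elim: k => //= k IH; rewrite w_h. Qed.

Lemma sum_reps_fconnect x : \sum_(a in R) w a * (fconnect h x a)%:R = w x.
Proof.
transitivity (\sum_(a in R) w x * (fconnect h x a)%:R).
  apply: eq_bigr => a _; have [con|] := boolP (fconnect h x a); last by rewrite !mulr0.
  by rewrite -(iter_findex con) w_iter.
rewrite -mulr_sumr -natr_sum.
have -> : (\sum_(a in R) fconnect h x a)%N = 1%N.
  rewrite -(R_reps x) -sum1_card big_mkcond [RHS]big_mkcond.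
  by apply: eq_bigr => a _; rewrite inE; case: (a \in R).
by rewrite mulr1.
Qed.

Lemma sum_rotr_orbit_reps r xi :
  \sum_(k < (size r).+1) \sum_(a in R) w a * (rotr k.+1 (rcons r xi) == orbit h a)%:R
  = (xi :: r == orbit h xi)%:R * w xi.
Proof.
under eq_bigr => k _ do under eq_bigr => a _ do rewrite rotr_rcons_eq_orbit //.
have [e|_] := eqVneq (xi :: r) (orbit h xi); last first.
  by rewrite mul0r big1 // => k _; rewrite big1 // => a _; rewrite mulr0.
have -> : (size r).+1 = order h xi by rewrite -size_orbit -e.
rewrite mul1r exchange_big /= -(sum_reps_fconnect xi); apply: eq_bigr => a _.
by rewrite -mulr_sumr -(sum_iter_eq h_inj a xi) natr_sum.
Qed.

End OrbitRepresentatives.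

Section OrbitTrace.
Variables (K : fieldType) (V A : finType) (s t : A -> V) (h : A -> A) (w : A -> K).

Definition orbit_trace (x : series K V A) : K := \sum_a w a * x (s a) (orbit h a).

Lemma orbit_trace_big I (r : seq I) (F : I -> series K V A) :
  orbit_trace (fun v p => \sum_(i <- r) F i v p) = \sum_(i <- r) orbit_trace (F i).
Proof. by rewrite /orbit_trace; under eq_bigr => a _ do rewrite mulr_sumr; exact: exchange_big. Qed.

Lemma orbit_traceZ k x : orbit_trace (fun v p => k * x v p) = k * orbit_trace x.
Proof. by rewrite /orbit_trace mulr_sumr; apply: eq_bigr => a _; rewrite mulrCA. Qed.

Lemma orbit_traceB x y :
  orbit_trace (fun v p => x v p - y v p) = orbit_trace x - orbit_trace y.
Proof. by rewrite /orbit_trace -sumrB; apply: eq_bigr => a _; rewrite mulrBr. Qed.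

Lemma eq_orbit_trace x y : (forall v p, (size p <= #|A|)%N -> x v p = y v p) ->
  orbit_trace x = orbit_trace y.
Proof. by move=> xy; apply: eq_bigr => a _; rewrite xy // size_orbit max_card. Qed.

Hypothesis h_inj : injective h.
Hypothesis s_h : forall a, s (h a) = t a.
Hypothesis w_h : forall a, w (h a) = w a.

Lemma orbit_trace_rot1 v p : is_cycle s t v p ->
  orbit_trace (path_series K v p) = orbit_trace (path_series K (rot1_start t v p) (rot 1 p)).
Proof.
move=> cyc; rewrite /orbit_trace [RHS](reindex_inj h_inj) /=.
apply: eq_bigr => a _; rewrite w_h; congr (_ * _).
rewrite /path_series -rot1_orbit // (inj_eq (@rot_inj 1%N _)).
have [e|] := eqVneq (orbit h a) p; last by rewrite !andbF.
move: cyc; rewrite -e orbit_cons /is_cycle /= => /andP[/andP[-> _] _].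
by rewrite s_h eqxx.
Qed.

Lemma orbit_trace_smul3 (u d v : series K V A) (k : K) xi :
  (1 < order h xi)%N ->
  (forall y m, d (s y) (traject h y m) = k * ((m == (order h xi).-1) && (y == h xi))%:R) ->
  orbit_trace (smul s t (smul s t u d) v) =
  k * w xi * (u (t xi) [::] * v (s xi) [:: xi] + u (s xi) [:: xi] * v (s xi) [::]).
Proof.
move=> gt1 d_traject; rewrite /orbit_trace.
under eq_bigr => a _ do rewrite (smul3_orbit h_inj s_h u v a gt1 d_traject).
pose F1 a := k * w a * (u (s a) [::] * v (s (finv h a)) [:: finv h a]).
pose F2 a := k * w a * (u (s a) [:: a] * v (s a) [::]).
transitivity (\sum_a ((a == h xi)%:R * F1 a + (a == xi)%:R * F2 a)).
  by apply: eq_bigr => a _; rewrite /F1 /F2; ring.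
rewrite big_split /= !sum_pick1 /F1 /F2 w_h s_h finv_f //; ring.
Qed.

End OrbitTrace.

Section Setting.
Variables (K : fieldType) (V A : finType) (s t : A -> V) (f g : A -> A) (c : A -> K)
  (Rf Rg : {set A}).
Hypothesis f_inj : injective f.
Hypothesis g_inj : injective g.
Hypothesis s_f : forall a, s (f a) = t a.
Hypothesis s_g : forall a, s (g a) = t a.
Hypothesis fg_neq : forall a, f a != g a.
Hypothesis no_loop : forall a, s a != t a.
Hypothesis no_2cycle : forall a b, s a = t b -> t a = s b -> False.
Hypothesis f3 : forall a, f (f (f a)) = a.
Hypothesis c_g : forall a, c (g a) = c a.
Hypothesis c_neq0 : forall a, c a != 0.
Hypothesis Rf_reps : orbit_reps f Rf.
Hypothesis Rg_reps : orbit_reps g Rg.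

Notation W := (W_pot s f g c Rf Rg).

Lemma order_f a : order f a = 3%N.
Proof.
have f_neq b : f b != b by apply: contra (no_loop b) => /eqP {1}<-; rewrite s_f.
apply: (@order_cycle _ f [:: a; f a; f (f a)]); last exact: mem_head.
  by rewrite /= f3 !eqxx.
have ne1 : a != f a by rewrite eq_sym f_neq.
have ne2 : a != f (f a) by apply: contra (f_neq a) => /eqP {1}->; rewrite f3.
by rewrite /= !inE negb_or andbT (inj_eq f_inj) ne1 ne2.
Qed.

Lemma orbit_fE a : orbit f a = [:: a; f a; f (f a)].
Proof. by rewrite /orbit order_f. Qed.

Lemma order_g_ge3 a : (3 <= order g a)%N.
Proof.
have := iter_order g_inj a; have := order_gt0 g a.
case: (order g a) => [|[|[|n]]] //= _ ga.
  by case/eqP: (no_loop a); rewrite -{1}ga s_g.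
by case: (no_2cycle (_ : s a = t (g a)) (esym (s_g a))); rewrite -{1}ga s_g.
Qed.

Lemma W_eval xi p : W (s (head xi p)) p =
  \sum_(a in Rf) (p == orbit f a)%:R - \sum_(b in Rg) c b * (p == orbit g b)%:R.
Proof.
rewrite /W_pot; congr (_ - _); apply: eq_bigr => a _.
  by rewrite -orbit_fE path_series_orbit.
by rewrite path_series_orbit.
Qed.

Lemma dcyc_W xi v r : dcyc s t xi W v r =
  ((v == t xi) && (xi :: r == orbit f xi))%:R
  - c xi * ((v == t xi) && (xi :: r == orbit g xi))%:R.
Proof.
rewrite /dcyc; under eq_bigr => k _ do rewrite W_eval.
rewrite sumrB (sum_rotr_orbit_reps g_inj c_g Rg_reps) mulrC.
have := sum_rotr_orbit_reps (w := fun=> 1 : K) f_inj (fun=> erefl) Rf_reps r xi.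
under eq_bigr => k _ do under eq_bigr => a _ do rewrite mul1r.
move=> ->; rewrite mulr1.
have [orb|] := boolP ((xi :: r == orbit f xi) || (xi :: r == orbit g xi)); last first.
  by case/norP=> /negbTE-> /negbTE->; rewrite !andbF mulr0 subr0; case: ifP.
suff -> : valid_from s t v (rcons r xi) && (end_of t v (rcons r xi) == v) = (v == t xi).
  by case: (v == t xi); rewrite ?mulr0 ?subr0.
by case/orP: orb => [/(cycle_from_rcons_orbit f_inj s_f)|/(cycle_from_rcons_orbit g_inj s_g)]->.
Qed.

Lemma dcyc_W_traject_f xi y m :
  dcyc s t xi W (s y) (traject f y m) = ((m == 2%N) && (y == f xi))%:R.
Proof.
have gf_neq a : g a != f a by rewrite eq_sym.
have og : (1 < (order g xi).-1)%N by rewrite -ltnS prednK ?order_gt0 ?order_g_ge3.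
rewrite dcyc_W cons_traject_eq_orbit ?order_f // [orbit g xi]orbit_cons eqseq_cons eqxx.
rewrite [traject f _ _ == _]eq_sym traject_eqF // !andbF mulr0 subr0.
by have [->|] := eqVneq y (f xi); rewrite ?s_f ?eqxx ?andbF.
Qed.

Lemma dcyc_W_traject_g xi y m :
  dcyc s t xi W (s y) (traject g y m) = - c xi * ((m == (order g xi).-1) && (y == g xi))%:R.
Proof.
rewrite dcyc_W cons_traject_eq_orbit; last by apply: leq_trans (order_g_ge3 xi).
rewrite [orbit f xi]orbit_cons eqseq_cons eqxx [traject g _ _ == _]eq_sym.
rewrite traject_eqF ?order_f // !andbF sub0r mulNr.
by have [->|] := eqVneq y (g xi); rewrite ?s_g ?eqxx ?andbF.
Qed.

Definition cyclic_trace (x : series K V A) : K :=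
  orbit_trace s f (fun=> 1) x + orbit_trace s g (fun b => (c b)^-1) x.

Lemma cyclic_trace_big I (r : seq I) (F : I -> series K V A) :
  cyclic_trace (fun v p => \sum_(i <- r) F i v p) = \sum_(i <- r) cyclic_trace (F i).
Proof. by rewrite /cyclic_trace !orbit_trace_big big_split. Qed.

Lemma cyclic_traceZ k x : cyclic_trace (fun v p => k * x v p) = k * cyclic_trace x.
Proof. by rewrite /cyclic_trace !orbit_traceZ mulrDr. Qed.

Lemma cyclic_traceB x y :
  cyclic_trace (fun v p => x v p - y v p) = cyclic_trace x - cyclic_trace y.
Proof. by rewrite /cyclic_trace !orbit_traceB addrACA opprD. Qed.

Lemma eq_cyclic_trace x y : (forall v p, (size p <= #|A|)%N -> x v p = y v p) ->
  cyclic_trace x = cyclic_trace y.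
Proof. by move=> xy; rewrite /cyclic_trace !(eq_orbit_trace _ _ _ xy). Qed.

Lemma cyclic_trace_closure (S : series K V A -> Prop) x :
  in_closure S x -> exists2 y, S y & cyclic_trace x = cyclic_trace y.
Proof. by case/(_ #|A|.+1) => y [Sy xy]; exists y => //; apply: eq_cyclic_trace. Qed.

Lemma cyclic_trace_rot1 v p : is_cycle s t v p ->
  cyclic_trace (path_series K v p) = cyclic_trace (path_series K (rot1_start t v p) (rot 1 p)).
Proof.
move=> cyc; rewrite /cyclic_trace (orbit_trace_rot1 f_inj s_f _ cyc) //.
by rewrite (orbit_trace_rot1 g_inj s_g _ cyc) // => a; rewrite c_g.
Qed.

Lemma cyclic_trace_smul3 u xi v :
  cyclic_trace (smul s t (smul s t u (dcyc s t xi W)) v) = 0.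
Proof.
have gt1_f : (1 < order f xi)%N by rewrite order_f.
have gt1_g : (1 < order g xi)%N by apply: leq_trans (order_g_ge3 xi).
have d_f y m : dcyc s t xi W (s y) (traject f y m) =
    1 * ((m == (order f xi).-1) && (y == f xi))%:R.
  by rewrite dcyc_W_traject_f order_f mul1r.
rewrite /cyclic_trace (orbit_trace_smul3 f_inj s_f _ u v gt1_f d_f) //.
rewrite (orbit_trace_smul3 g_inj s_g _ u v gt1_g (dcyc_W_traject_g xi)); last first.
  by move=> a; rewrite c_g.
by rewrite mulNr mulfV // !mul1r mulN1r addrN.
Qed.

Lemma cyclic_trace_jacobian y : jacobian_ideal s t W y -> cyclic_trace y = 0.
Proof.
case/cyclic_trace_closure => z [l z_l] ->.
rewrite (@eq_cyclic_trace _ (fun v p =>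
    \sum_(e <- l) smul s t (smul s t e.1.1 (dcyc s t e.1.2 W)) e.2 v p)) => [|v p _].
  by rewrite cyclic_trace_big big1 // => e _; apply: cyclic_trace_smul3.
exact: z_l.
Qed.

Lemma cyclic_trace_cyc_equiv x y : cyc_equiv s t x y -> cyclic_trace x = cyclic_trace y.
Proof.
case/cyclic_trace_closure => z [l [l_cyc z_l]] xy; apply/eqP; rewrite -subr_eq0 -cyclic_traceB xy.
rewrite (@eq_cyclic_trace _ (fun v p => \sum_(e <- l) e.1 * (path_series K e.2.1 e.2.2 v p
    - path_series K (rot1_start t e.2.1 e.2.2) (rot 1 e.2.2) v p))) => [|v p _]; last exact: z_l.
rewrite cyclic_trace_big big1_seq // => e /andP[_ el].
by rewrite cyclic_traceZ cyclic_traceB cyclic_trace_rot1 ?l_cyc // subrr mulr0.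
Qed.

Lemma cyclic_trace_triangle a : cyclic_trace (path_series K (s a) (orbit f a)) = 1.
Proof.
have gf_neq x : g x != f x by rewrite eq_sym.
rewrite /cyclic_trace /orbit_trace [X in _ + X]big1 ?addr0 => [|b _]; last first.
  rewrite /path_series [orbit g b]orbit_cons [orbit f a]orbit_cons eqseq_cons traject_eqF //.
    by rewrite !andbF mulr0.
  by rewrite -ltnS prednK ?order_gt0 ?order_g_ge3.
rewrite -[RHS](sum_pick1 a (fun=> 1)); apply: eq_bigr => b _.
rewrite mul1r mulr1 /path_series; have [->|ne] := eqVneq b a; first by rewrite !eqxx.
by rewrite [orbit f b]orbit_cons [orbit f a]orbit_cons eqseq_cons (negbTE ne) andbF.
Qed.

Lemma W_pot_not_rigid (a0 : A) : ~ rigid s t W.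
Proof.
move=> W_rigid; pose P := path_series K (s a0) (orbit f a0).
have P_pot : potential s t P.
  move=> v p; rewrite /P /path_series; case: ifP => [/andP[/eqP-> /eqP->] _|]; last by rewrite eqxx.
  by rewrite /is_cycle -andbA cycle_from_orbit // eqxx orbit_cons.
have [y [y_jac Py]] := W_rigid P P_pot.
have := cyclic_trace_cyc_equiv Py; rewrite cyclic_trace_triangle cyclic_trace_jacobian //.
by move/eqP; rewrite oner_eq0.
Qed.

End Setting.

Unset Implicit Arguments. Set Strict Implicit.

Theorem proposition4p4 (K : fieldType) (V A : finType) (s t : A -> V)
  (f g : A -> A) (c : A -> K) (Rf Rg Omega : {set A}) :
  quiver_setting s t f g ->
  (forall a, c a != 0) ->
  (forall a, c (g a) = c a) ->
  orbit_reps f Rf -> orbit_reps g Rg -> orbit_reps g Omega ->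
  ((forall a, (4 <= order g a)%N \/ (4 <= order g (f a))%N)
   \/ ((forall a, order g a = 3%N) /\ \prod_(b in Omega) c b != 1)) ->
  ~ rigid s t (W_pot s f g c Rf Rg).
Proof.
(* The cyclic trace argument works for every [c]: the case distinction is not needed. *)
move=> [[V_gt0 _] [no_loop [no_2cycle [deg [[f_bij g_bij] [fg_out f3]]]]]].
move=> c_neq0 c_g Rf_reps Rg_reps _ _.
have s_f a : s (f a) = t a.
  by have /setP/(_ (f a)) := fg_out a; rewrite !inE eqxx => /esym/eqP.
have s_g a : s (g a) = t a.
  by have /setP/(_ (g a)) := fg_out a; rewrite !inE eqxx orbT => /esym/eqP.
have fg_neq a : f a != g a.
  by apply/eqP => fg; have := (deg (t a)).1; rewrite -fg_out fg setUid cards1.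
have [v0 _] := card_gt0P V_gt0.
have [a0 _] : exists a0, a0 \in [set a | s a == v0] by apply/card_gt0P; rewrite (deg v0).1.
exact: (W_pot_not_rigid (bij_inj f_bij) (bij_inj g_bij) s_f s_g fg_neq no_loop no_2cycle
  f3 c_g c_neq0 Rf_reps Rg_reps a0).
Qed.
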